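(* Let $N\ge 4$ be even and let $P_1,\dots,P_N$ be an $N$-periodic billiard trajectory in $E$. For $j=1,2$ let $P_{j,i}^{-1}$ be the inversion of $P_i$ in the unit circle centered at $f_j$, i.e. $P_{j,i}^{-1}=f_j+\dfrac{P_i-f_j}{|P_i-f_j|^2}$, and let $A_j^\dagger$ be the signed area of the polygon $P_{j,1}^{-1},\dots,P_{j,N}^{-1}$. Then $A_1^\dagger=A_2^\dagger$, i.e. $A_1^\dagger/A_2^\dagger=1$.
   Context: Let $E$ be the ellipse $x^2/a^2+y^2/b^2=1$ with $a>b>0$, center $O=(0,0)$ and foci $f_1=(-\sqrt{a^2-b^2},0)$, $f_2=(\sqrt{a^2-b^2},0)$. An $N$-periodic billiard trajectory is a convex polygon with vertices $P_1,\dots,P_N\in E$ (indices mod $N$), listed counterclockwise and winding once around $O$, with $P_i\neq P_{i+1}$, such that at every vertex $P_i$ the normal line to $E$ at $P_i$ bisects the angle $\angle P_{i-1}P_iP_{i+1}$, and all of whose sides are tangent to a common ellipse confocal with $E$. The signed area of a polygon with vertices $W_i=(x_i,y_i)$, $i=1,\dots,N$ (indices mod $N$), is $S=\tfrac12\sum_{i=1}^N (x_iy_{i+1}-x_{i+1}y_i)$. *)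

From Stdlib Require Import Reals Lra List.
Open Scope R_scope.

Definition pt : Type := (R * R)%type.

Definition padd (p q : pt) : pt := (fst p + fst q, snd p + snd q).
Definition psub (p q : pt) : pt := (fst p - fst q, snd p - snd q).
Definition pscale (c : R) (p : pt) : pt := (c * fst p, c * snd p).
Definition cross (u v : pt) : R := fst u * snd v - snd u * fst v.
Definition nrm2 (p : pt) : R := fst p ^ 2 + snd p ^ 2.
Definition nrm (p : pt) : R := sqrt (nrm2 p).

Definition on_ellipse (al be : R) (p : pt) : Prop :=
  fst p ^ 2 / al ^ 2 + snd p ^ 2 / be ^ 2 = 1.

Definition focus1 (a b : R) : pt := (- sqrt (a ^ 2 - b ^ 2), 0).
Definition focus2 (a b : R) : pt := (sqrt (a ^ 2 - b ^ 2), 0).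

(* normal line to E at P (direction (x/a^2, y/b^2)) bisects the angle
   Pm P Pp : it is parallel to the sum of the unit vectors P->Pm and P->Pp *)
Definition normal_bisects (a b : R) (Pm P Pp : pt) : Prop :=
  let n := (fst P / a ^ 2, snd P / b ^ 2) in
  let u := pscale (/ nrm (psub Pm P)) (psub Pm P) in
  let v := pscale (/ nrm (psub Pp P)) (psub Pp P) in
  cross n (padd u v) = 0.

Definition line_tangent (al be : R) (P Q : pt) : Prop :=
  exists! t : R, on_ellipse al be (padd P (pscale t (psub Q P))).

Definition confocal (a b al be : R) : Prop :=
  0 < be /\ be < al /\ al ^ 2 - be ^ 2 = a ^ 2 - b ^ 2.

Definition billiard_traj (a b : R) (N : nat) (P : nat -> pt) : Prop :=
  (forall i, P (i + N)%nat = P i) /\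
  (forall i, on_ellipse a b (P i)) /\
  (forall i, P i <> P (S i)) /\
  (* convex polygon, counterclockwise: every vertex lies on the left
     (or on) each directed side line *)
  (forall i j, 0 <= cross (psub (P (S i)) (P i)) (psub (P j) (P i))) /\
  (* counterclockwise and winding exactly once around O: continuous polar
     angle with increments in (0, pi), total increase 2 pi *)
  (exists phi : nat -> R,
      (forall i, (i <= N)%nat ->
         P i = (nrm (P i) * cos (phi i), nrm (P i) * sin (phi i))) /\
      (forall i, (i < N)%nat -> phi i < phi (S i) < phi i + PI) /\
      phi N = phi O + 2 * PI) /\
  (forall i, normal_bisects a b (P i) (P (S i)) (P (S (S i)))) /\
  (exists al be, confocal a b al be /\
     forall i, line_tangent al be (P i) (P (S i))).

Definition signed_area (W : nat -> pt) (N : nat) : R :=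
  / 2 * fold_right Rplus 0
    (map (fun i => fst (W i) * snd (W (S i)) - fst (W (S i)) * snd (W i))
         (seq 0 N)).

Definition inv_circle (f p : pt) : pt :=
  padd f (pscale (/ nrm2 (psub p f)) (psub p f)).

(* Write the vertices by eccentric angles, P i = (a cos s_i, b sin s_i), and let
   lam = a^2 - al^2 be the parameter of the confocal caustic (al, be).  For the
   weight w(x) = 1 / sqrt ((a^2 - lam) - (a^2 - b^2) cos^2 x) with primitive F,
   every chord of the ellipse tangent to the caustic advances F by the same
   amount (the family of tangent chords, parametrised by its midpoint, has
   constant F-length since the derivative vanishes); and F(x + PI) - F x is
   constant since w has period PI.  An orbit closing after one turn thus has
   N equal F-steps making two half-periods, so for N = 2 k the k-th successor
   of each vertex is its antipode: P (i + k) = - P i.  The half turn X |-> -X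
   exchanges the foci and commutes with the inversions, so it carries the
   polygon inverted in f1 onto the one inverted in f2 with indices shifted by
   k, which preserves signed area. *)

From Stdlib Require Import Reals Lra Lia List.
From Coquelicot Require Import Coquelicot.
Open Scope R_scope.

Lemma const_of_deriv0 (f : R -> R) :
  (forall x, is_derive f x 0) -> forall x y, f x = f y.
Proof.
  intros Hf.
  assert (Hlt : forall u v, u < v -> f u = f v).
  { intros u v Huv.
    destruct (MVT_cor2 f (fun _ => 0) u v Huv) as [c [Hc _]].
    - intros c _. apply is_derive_Reals, Hf.
    - lra. }
  intros x y. destruct (Rtotal_order x y) as [H | [-> | H]]; auto.
  symmetry; auto.
Qed.

Lemma incr_of_deriv_pos (f f' : R -> R) :
  (forall x, is_derive f x (f' x)) -> (forall x, 0 < f' x) ->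
  forall x y, x < y -> f x < f y.
Proof.
  intros Hf Hpos x y Hxy.
  destruct (MVT_cor2 f f' x y Hxy) as [c [Hc _]].
  - intros c _. apply is_derive_Reals, Hf.
  - specialize (Hpos c). nra.
Qed.

Lemma is_derive_comp_R (f g : R -> R) x df dg :
  is_derive f (g x) df -> is_derive g x dg ->
  is_derive (fun x => f (g x)) x (dg * df).
Proof. intros Hf Hg. exact (is_derive_comp f g x df dg Hf Hg). Qed.

(** * The invariant measure of the confocal family

    For the ellipse with semi-axes [a > b > 0] and a caustic with parameter
    [lam] (semi-axes [sqrt (a^2 - lam)], [sqrt (b^2 - lam)]), the weight [w]
    on eccentric angles is the density of the measure in which all chords
    tangent to the caustic have equal length (shown below); [F] is its
    primitive. *)

Section Weight.
Variables a b lam : R.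
Hypothesis Hb : 0 < b.
Hypothesis Hab : b < a.
Hypothesis Hlb : lam < b ^ 2.

Definition wD (x : R) : R := (a^2 - lam) - (a^2 - b^2) * cos x ^ 2.
Definition w (x : R) : R := / sqrt (wD x).
Definition F (x : R) : R := RInt w 0 x.

Lemma wD_pos x : 0 < wD x.
Proof.
  unfold wD. pose proof (COS_bound x).
  assert (0 <= cos x ^ 2 <= 1) by (split; nra).
  assert (b^2 < a^2) by nra. nra.
Qed.

Lemma w_pos x : 0 < w x.
Proof. apply Rinv_0_lt_compat, sqrt_lt_R0, wD_pos. Qed.

Lemma w_cont x : continuous w x.
Proof.
  unfold w. apply (continuous_comp (fun x => sqrt (wD x)) Rinv).
  - apply continuous_sqrt_comp. unfold wD.
    apply (continuous_minus (fun _ => a^2 - lam) (fun x => (a^2 - b^2) * cos x ^ 2)).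
    + apply continuous_const.
    + apply (continuous_mult (fun _ => a^2 - b^2) (fun x => cos x ^ 2)).
      * apply continuous_const.
      * apply (continuous_comp cos (fun y => y ^ 2)); [apply continuous_cos|].
        apply (continuous_mult (fun y => y) (fun y => y ^ 1)); [apply continuous_id|].
        apply (continuous_mult (fun y => y) (fun _ => 1));
          [apply continuous_id | apply continuous_const].
  - apply continuous_Rinv, Rgt_not_eq, sqrt_lt_R0, wD_pos.
Qed.

Lemma F_deriv x : is_derive F x (w x).
Proof.
  apply (is_derive_RInt w F 0).
  - apply filter_forall. intros y. apply (RInt_correct w 0 y).
    apply ex_RInt_continuous. intros z _. apply w_cont.
  - apply w_cont.
Qed.

Lemma F_inj x y : F x = F y -> x = y.
Proof.
  pose proof (incr_of_deriv_pos F w F_deriv w_pos) as Hincr.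
  intros H. destruct (Rtotal_order x y) as [Hl | [He | Hg]]; auto.
  - apply Hincr in Hl; lra.
  - apply Hincr in Hg; lra.
Qed.

(* [w] has period [PI], so [F] grows by the same amount over every half turn. *)
Lemma F_halfper x y : F (x + PI) - F x = F (y + PI) - F y.
Proof.
  apply (const_of_deriv0 (fun x => F (x + PI) - F x)). intros z.
  replace 0 with (1 * w (z + PI) - w z)
    by (unfold w, wD; rewrite neg_cos; replace ((- cos z) ^ 2) with (cos z ^ 2) by ring; ring).
  apply (is_derive_minus (fun x => F (x + PI)) F); [|apply F_deriv].
  apply (is_derive_comp_R F (fun x => x + PI)); [apply F_deriv|].
  auto_derive; auto; ring.
Qed.
End Weight.

(** * Chords tangent to the caustic all have the same [F]-length

    Parametrise the chords of the ellipse tangent to the caustic by the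
    midpoint [m] of their eccentric-angle interval: the chord is
    [[m - hh m, m + hh m]] where [cos (hh m) ^ 2 = Rm m].  The function
    [Gf m = F (m + hh m) - F (m - hh m)] has zero derivative, so every tangent
    chord has [F]-length [Gf 0] (Poncelet's porism in Jacobi's form). *)

Section ChordInvariant.
Variables a b lam : R.
Hypothesis Hb : 0 < b.
Hypothesis Hab : b < a.
Hypothesis Hl : 0 < lam.
Hypothesis Hlb : lam < b ^ 2.

(* The chord of the ellipse between eccentric angles [s] and [t] is tangent to
   the caustic (the polynomial form of tangency given by [tangent_poly] below). *)
Definition tangent_chord (s t : R) : Prop :=
  (b^2 - lam) * (a * cos t - a * cos s)^2 + (a^2 - lam) * (b * sin t - b * sin s)^2
  = (a * cos s * (b * sin t) - b * sin s * (a * cos t))^2.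

(* [Rm m] is the squared cosine, and [Ym m] the squared tangent, of the
   half-width of the tangent chord centred at [m]. *)
Definition cA : R := (a^2 - lam) / a^2.
Definition cB : R := (b^2 - lam) / b^2.
Definition cq : R := cA - cB.
Definition Rm (m : R) : R := cA * cos m ^ 2 + cB * sin m ^ 2.
Definition Ym (m : R) : R := (1 - Rm m) / Rm m.
Definition hh (m : R) : R := atan (sqrt (Ym m)).

Lemma cB_pos : 0 < cB.
Proof. unfold cB. apply Rdiv_lt_0_compat; nra. Qed.

Lemma cA_lt1 : cA < 1.
Proof. unfold cA. apply (Rmult_lt_reg_r (a^2)); [nra|]. field_simplify; nra. Qed.

Lemma cq_nonneg : 0 <= cq.
Proof.
  unfold cq, cA, cB.
  replace ((a ^ 2 - lam) / a ^ 2 - (b ^ 2 - lam) / b ^ 2)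
    with (lam * (a^2 - b^2) / (a^2 * b^2)) by (field; lra).
  apply Rlt_le, Rdiv_lt_0_compat; apply Rmult_lt_0_compat; nra.
Qed.

Lemma Rm_bounds m : 0 < Rm m < 1.
Proof.
  unfold Rm. pose proof cB_pos. pose proof cA_lt1. pose proof cq_nonneg.
  pose proof (sin2_cos2 m) as Hm. unfold Rsqr in Hm. unfold cq in *.
  assert (0 <= cos m ^ 2) by nra. assert (0 <= sin m ^ 2) by nra.
  split; nra.
Qed.

Lemma Ym_pos m : 0 < Ym m.
Proof. unfold Ym. pose proof (Rm_bounds m). apply Rdiv_lt_0_compat; lra. Qed.

Lemma hh_bounds m : 0 < hh m < PI / 2.
Proof.
  unfold hh. split; [|apply atan_bound].
  rewrite <- atan_0. apply atan_increasing, sqrt_lt_R0, Ym_pos.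
Qed.

Lemma hh_trig m :
  0 < cos (hh m) /\ 0 < sin (hh m) /\ cos (hh m) ^ 2 = Rm m /\
  sin (hh m) = sqrt (Ym m) * cos (hh m).
Proof.
  pose proof (hh_bounds m). pose proof (Rm_bounds m). pose proof (Ym_pos m).
  assert (Hden : 0 < sqrt (1 + Ym m)) by (apply sqrt_lt_R0; lra).
  split; [apply cos_gt_0; lra|]. split; [apply sin_gt_0; lra|].
  unfold hh. rewrite cos_atan, sin_atan. unfold Rsqr.
  rewrite sqrt_sqrt by lra. split; [|field; lra].
  replace ((1 / sqrt (1 + Ym m)) ^ 2) with (1 / sqrt (1 + Ym m) ^ 2) by (field; lra).
  rewrite pow2_sqrt by lra. unfold Ym. field. lra.
Qed.

Definition hp (m : R) : R := cq * sin m * cos m / (Rm m * sqrt (Ym m)).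

Lemma hh_deriv m : is_derive hh m (hp m).
Proof.
  pose proof (Rm_bounds m) as HR. pose proof (Ym_pos m) as HY.
  assert (Hs : 0 < sqrt (Ym m)) by (apply sqrt_lt_R0; auto).
  assert (Datan : is_derive atan (sqrt (Ym m)) (/ (1 + sqrt (Ym m) ^ 2))).
  { apply is_derive_Reals, derivable_pt_lim_atan. }
  assert (Droot : is_derive (fun m => sqrt (Ym m)) m
                    (cq * sin m * cos m * 2 / Rm m ^ 2 / (2 * sqrt (Ym m)))).
  { unfold Ym, Rm. auto_derive;
      replace (cA * (cos m * (cos m * 1)) + cB * (sin m * (sin m * 1))) with (Rm m)
        by (unfold Rm; ring);
      replace ((1 + - Rm m) * / Rm m) with (Ym m) by (unfold Ym; field; lra);
      replace (cA * cos m ^ 2 + cB * sin m ^ 2) with (Rm m) by (unfold Rm; ring).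
    - repeat split; lra.
    - fold (Ym m). unfold cq. field. lra. }
  replace (hp m) with ((cq * sin m * cos m * 2 / Rm m ^ 2 / (2 * sqrt (Ym m)))
                       * / (1 + sqrt (Ym m) ^ 2)).
  - exact (is_derive_comp_R atan (fun m => sqrt (Ym m)) m _ _ Datan Droot).
  - unfold hp. rewrite pow2_sqrt by lra. unfold Ym. field. repeat split; try lra.
    fold (Ym m). lra.
Qed.

Lemma radicand_chord_ends cm sm ch sh :
  cm^2 + sm^2 = 1 -> ch^2 = cA * cm^2 + cB * sm^2 -> sh^2 + ch^2 = 1 ->
  (a^2 - lam) - (a^2 - b^2) * (cm * ch - sm * sh)^2 = (a^2*b^2/lam) * (sh*ch + cq*sm*cm)^2 /\
  (a^2 - lam) - (a^2 - b^2) * (cm * ch + sm * sh)^2 = (a^2*b^2/lam) * (sh*ch - cq*sm*cm)^2.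
Proof.
  intros Hm Hc Hh.
  assert (Hs : sm^2 = 1 - cm^2) by lra.
  assert (Hsh : sh^2 = 1 - ch^2) by lra.
  split.
  - replace ((a^2 - lam) - (a^2 - b^2) * (cm * ch - sm * sh)^2) with
      ((a^2 - lam) - (a^2 - b^2) * (cm^2 * ch^2 + sm^2 * sh^2)
       + 2 * (a^2 - b^2) * cm * ch * sm * sh) by ring.
    replace ((a^2*b^2/lam) * (sh*ch + cq*sm*cm)^2) with
      ((a^2*b^2/lam) * (sh^2*ch^2 + cq^2*sm^2*cm^2)
       + 2 * (a^2*b^2/lam) * cq * sh * ch * sm * cm) by ring.
    rewrite Hsh, Hs, Hc, Hs. unfold cq, cA, cB. field. lra.
  - replace ((a^2 - lam) - (a^2 - b^2) * (cm * ch + sm * sh)^2) with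
      ((a^2 - lam) - (a^2 - b^2) * (cm^2 * ch^2 + sm^2 * sh^2)
       - 2 * (a^2 - b^2) * cm * ch * sm * sh) by ring.
    replace ((a^2*b^2/lam) * (sh*ch - cq*sm*cm)^2) with
      ((a^2*b^2/lam) * (sh^2*ch^2 + cq^2*sm^2*cm^2)
       - 2 * (a^2*b^2/lam) * cq * sh * ch * sm * cm) by ring.
    rewrite Hsh, Hs, Hc, Hs. unfold cq, cA, cB. field. lra.
Qed.

Lemma w_of_square x X :
  0 < X -> wD a b lam x = (a^2*b^2/lam) * X^2 -> w a b lam x = sqrt lam / (a * b * X).
Proof.
  intros HX HD. unfold w. rewrite HD.
  assert (Hsl : 0 < sqrt lam) by (apply sqrt_lt_R0; lra).
  replace (a^2*b^2/lam * X^2) with ((a * b * X / sqrt lam) ^ 2).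
  - rewrite sqrt_pow2. { field. split; [lra|]. split; [lra|]. split; lra. }
    apply Rlt_le, Rdiv_lt_0_compat; [|lra].
    apply Rmult_lt_0_compat; [apply Rmult_lt_0_compat|]; lra.
  - rewrite <- (pow2_sqrt lam) at 2 by lra. field. lra.
Qed.

Lemma chord_factors_pos m :
  0 < sin (hh m) * cos (hh m) + cq * sin m * cos m /\
  0 < sin (hh m) * cos (hh m) - cq * sin m * cos m.
Proof.
  destruct (hh_trig m) as (Hc & Hs & H2 & _).
  set (sh := sin (hh m)) in *. set (ch := cos (hh m)) in *.
  pose proof cB_pos. pose proof cA_lt1. pose proof cq_nonneg.
  pose proof (sin2_cos2 m) as Hm. unfold Rsqr in Hm.
  pose proof (sin2_cos2 (hh m)) as Hh. unfold Rsqr in Hh. fold sh ch in Hh.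
  unfold Rm in H2.
  assert (Hs2 : sh^2 = (1 - cA) + cq * sin m ^ 2) by (unfold cq; nra).
  assert (Hc2 : ch^2 = cB + cq * cos m ^ 2) by (unfold cq; nra).
  assert (Hdiff : 0 < (sh*ch)^2 - (cq*sin m*cos m)^2).
  { replace ((sh*ch)^2 - (cq*sin m*cos m)^2)
      with (sh^2 * ch^2 - cq^2 * sin m^2 * cos m^2) by ring.
    rewrite Hs2, Hc2.
    assert (0 <= sin m ^ 2) by nra. assert (0 <= cos m ^ 2) by nra.
    assert (0 < (1 - cA) * cB) by nra.
    assert (0 <= (1 - cA) * cq * cos m ^ 2) by (apply Rmult_le_pos; nra).
    assert (0 <= cq * sin m ^ 2 * cB) by (apply Rmult_le_pos; nra).
    nra. }
  assert (0 < sh * ch) by nra.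
  split; nra.
Qed.

Definition Gf (m : R) : R := F a b lam (m + hh m) - F a b lam (m - hh m).

Lemma Gf_deriv m : is_derive Gf m 0.
Proof.
  assert (Dp : is_derive (fun m => m + hh m) m (1 + hp m)).
  { apply (is_derive_plus (fun m => m) hh); [auto_derive; auto | apply hh_deriv]. }
  assert (Dm : is_derive (fun m => m - hh m) m (1 - hp m)).
  { apply (is_derive_minus (fun m => m) hh); [auto_derive; auto | apply hh_deriv]. }
  pose proof (is_derive_comp_R _ _ m _ _ (F_deriv a b lam Hb Hab Hlb _) Dp) as Ep.
  pose proof (is_derive_comp_R _ _ m _ _ (F_deriv a b lam Hb Hab Hlb _) Dm) as Em.
  replace 0 with ((1 + hp m) * w a b lam (m + hh m) - (1 - hp m) * w a b lam (m - hh m)).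
  { apply (is_derive_minus (fun m => F a b lam (m + hh m))
                           (fun m => F a b lam (m - hh m))); auto. }
  destruct (hh_trig m) as (Hc & Hs & H2 & Hsin).
  destruct (chord_factors_pos m) as [Xp Xm].
  set (sh := sin (hh m)) in *. set (ch := cos (hh m)) in *.
  assert (Hhp : hp m = cq * sin m * cos m / (sh * ch)).
  { unfold hp. replace (sqrt (Ym m)) with (sh / ch) by (rewrite Hsin; field; lra).
    rewrite <- H2. field. lra. }
  pose proof (sin2_cos2 m) as Hm. unfold Rsqr in Hm.
  pose proof (sin2_cos2 (hh m)) as Hh. unfold Rsqr in Hh. fold sh ch in Hh.
  unfold Rm in H2.
  destruct (radicand_chord_ends (cos m) (sin m) ch sh) as [K1 K2]; [lra | lra | lra |].
  rewrite (w_of_square _ (sh*ch + cq*sin m*cos m)), (w_of_square _ (sh*ch - cq*sin m*cos m));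
    try lra.
  - rewrite Hhp. field. repeat split; nra.
  - unfold wD. rewrite cos_minus. exact K2.
  - unfold wD. rewrite cos_plus. exact K1.
Qed.

Lemma Gf_const m : Gf m = Gf 0.
Proof. apply const_of_deriv0, Gf_deriv. Qed.

Lemma tangent_chord_halfwidth m h :
  0 < h < PI / 2 -> tangent_chord (m - h) (m + h) -> hh m = h.
Proof.
  intros Hh Htan. unfold tangent_chord in Htan.
  assert (Hch : 0 < cos h) by (apply cos_gt_0; lra).
  assert (Hsh : 0 < sin h) by (apply sin_gt_0; lra).
  pose proof (sin2_cos2 m) as Hm. unfold Rsqr in Hm.
  pose proof (sin2_cos2 h) as Hh2. unfold Rsqr in Hh2.
  assert (Hc2 : cos h ^ 2 = Rm m).
  { rewrite cos_plus, cos_minus, sin_plus, sin_minus in Htan.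
    set (cm := cos m) in *. set (sm := sin m) in *.
    set (ch := cos h) in *. set (sh := sin h) in *.
    replace ((b ^ 2 - lam) * (a * (cm * ch - sm * sh) - a * (cm * ch + sm * sh)) ^ 2 +
             (a ^ 2 - lam) * (b * (sm * ch + cm * sh) - b * (sm * ch - cm * sh)) ^ 2)
      with (4 * sh^2 * ((b ^ 2 - lam) * a^2 * sm^2 + (a ^ 2 - lam) * b^2 * cm^2))
      in Htan by ring.
    replace ((a * (cm * ch + sm * sh) * (b * (sm * ch + cm * sh)) -
              b * (sm * ch - cm * sh) * (a * (cm * ch - sm * sh))) ^ 2)
      with (4 * sh^2 * (a^2 * b^2 * ch^2 * (sm * sm + cm * cm)^2)) in Htan by ring.
    rewrite Hm in Htan.
    apply Rmult_eq_reg_l in Htan; [|nra].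
    unfold Rm, cA, cB. fold cm sm.
    assert (0 < a^2) by nra. assert (0 < b^2) by nra.
    apply (Rmult_eq_reg_l (a^2 * b^2)); [|nra].
    field_simplify; [lra | split; lra]. }
  assert (HY : tan h = sqrt (Ym m)).
  { unfold Ym. rewrite <- Hc2. unfold tan.
    rewrite <- (sqrt_pow2 (sin h / cos h)) by (apply Rlt_le, Rdiv_lt_0_compat; lra).
    f_equal. field_simplify; try lra. f_equal. lra. }
  unfold hh. rewrite <- HY. apply atan_tan. lra.
Qed.

Lemma chord_step s t :
  s < t < s + PI -> tangent_chord s t -> F a b lam t - F a b lam s = Gf 0.
Proof.
  intros Hst Htan.
  set (m := (s + t) / 2). set (h := (t - s) / 2).
  assert (Es : s = m - h) by (unfold m, h; field).
  assert (Et : t = m + h) by (unfold m, h; field).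
  rewrite Es, Et in Htan.
  rewrite <- (Gf_const m). unfold Gf.
  rewrite (tangent_chord_halfwidth m h); [|unfold h; lra | exact Htan].
  rewrite <- Es, <- Et. reflexivity.
Qed.
End ChordInvariant.

(** The point [P + t (Q - P)] lies on the ellipse with semi-axes [al], [be]
    iff [t] is a root of the quadratic [chord_c2 t^2 + chord_c1 t + chord_c0];
    tangency of the line [PQ] means this quadratic has exactly one root. *)

Definition chord_c2 (al be : R) (P Q : pt) : R :=
  (fst Q - fst P)^2 / al^2 + (snd Q - snd P)^2 / be^2.
Definition chord_c1 (al be : R) (P Q : pt) : R :=
  2 * (fst P * (fst Q - fst P) / al^2 + snd P * (snd Q - snd P) / be^2).
Definition chord_c0 (al be : R) (P : pt) : R :=
  fst P ^ 2 / al^2 + snd P ^ 2 / be^2 - 1.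

Lemma on_ellipse_line al be P Q t : al <> 0 -> be <> 0 ->
  on_ellipse al be (padd P (pscale t (psub Q P))) <->
  chord_c2 al be P Q * t^2 + chord_c1 al be P Q * t + chord_c0 al be P = 0.
Proof.
  intros Ha Hb. unfold on_ellipse, chord_c2, chord_c1, chord_c0, padd, pscale, psub; simpl.
  match goal with |- ?L = 1 <-> ?M = 0 => assert (E : M = L - 1) by (field; auto) end.
  rewrite E. split; intros; lra.
Qed.

Lemma chord_c2_pos al be P Q : 0 < be -> be < al -> P <> Q -> 0 < chord_c2 al be P Q.
Proof.
  intros Hbe Hal HPQ. unfold chord_c2.
  destruct P as [px py], Q as [qx qy]; cbn [fst snd].
  assert (Hne : qx - px <> 0 \/ qy - py <> 0).
  { destruct (Req_dec qx px) as [E | E]; [right | left; lra].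
    intros Hy. apply HPQ. subst qx. f_equal. lra. }
  assert (Hx := pow2_ge_0 (qx - px)). assert (Hy := pow2_ge_0 (qy - py)).
  assert (0 < al^2) by nra. assert (0 < be^2) by nra.
  destruct Hne as [Hne | Hne]; apply pow2_gt_0 in Hne.
  - assert (0 < (qx - px)^2 / al^2) by (apply Rdiv_lt_0_compat; lra).
    assert (0 <= (qy - py)^2 / be^2) by (apply Rmult_le_pos; [lra | apply Rlt_le, Rinv_0_lt_compat; lra]).
    lra.
  - assert (0 < (qy - py)^2 / be^2) by (apply Rdiv_lt_0_compat; lra).
    assert (0 <= (qx - px)^2 / al^2) by (apply Rmult_le_pos; [lra | apply Rlt_le, Rinv_0_lt_compat; lra]).
    lra.
Qed.

Lemma quad_disc0 (c2 c1 c0 : R) : 0 < c2 ->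
  (exists! t, c2 * t^2 + c1 * t + c0 = 0) -> c1^2 - 4 * c2 * c0 = 0.
Proof.
  intros H2 [t0 [Ht0 Hu]].
  set (d := c1^2 - 4 * c2 * c0).
  destruct (Rtotal_order d 0) as [Hn | [He | Hp]]; auto; exfalso.
  - assert (E : c2 * (c2 * t0^2 + c1 * t0 + c0) = (c2 * t0 + c1 / 2)^2 - d / 4)
      by (unfold d; field).
    rewrite Ht0 in E. pose proof (pow2_ge_0 (c2 * t0 + c1 / 2)). lra.
  - set (r := sqrt d).
    assert (Hr : r * r = d) by (apply sqrt_sqrt; lra).
    assert (Hr0 : 0 < r) by (apply sqrt_lt_R0; lra).
    assert (Root : forall e, e * e = d ->
              c2 * ((- c1 + e) / (2 * c2))^2 + c1 * ((- c1 + e) / (2 * c2)) + c0 = 0).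
    { intros e He. field_simplify; [|lra].
      replace (e^2) with d by (rewrite <- He; ring). unfold d. field. lra. }
    assert (Er : - r * - r = d) by lra.
    pose proof (Hu _ (Root r Hr)) as E1. pose proof (Hu _ (Root (- r) Er)) as E2.
    assert (E : (- c1 + r) / (2 * c2) = (- c1 + - r) / (2 * c2)) by congruence.
    apply (Rmult_eq_compat_r (2 * c2)) in E.
    unfold Rdiv in E. rewrite !Rmult_assoc, !Rinv_l in E by lra. lra.
Qed.

Lemma quad_disc0_nonneg (c2 c1 c0 : R) : 0 < c2 -> c1^2 - 4 * c2 * c0 = 0 ->
  forall t, 0 <= c2 * (c2 * t^2 + c1 * t + c0).
Proof.
  intros H2 Hd t.
  replace (c2 * (c2 * t^2 + c1 * t + c0))
    with ((c2 * t + c1 / 2)^2 - (c1^2 - 4 * c2 * c0) / 4) by field.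
  rewrite Hd. pose proof (pow2_ge_0 (c2 * t + c1 / 2)). lra.
Qed.

Lemma tangent_disc0 al be P Q : 0 < be -> be < al -> P <> Q -> line_tangent al be P Q ->
  chord_c1 al be P Q ^ 2 - 4 * chord_c2 al be P Q * chord_c0 al be P = 0.
Proof.
  intros Hbe Hal HPQ [t0 [Ht0 Hu]].
  apply quad_disc0; [apply chord_c2_pos; auto|].
  exists t0. split.
  - apply on_ellipse_line; auto; lra.
  - intros t Ht. apply Hu, on_ellipse_line; auto; lra.
Qed.

Lemma tangent_poly al be P Q : 0 < be -> be < al -> P <> Q -> line_tangent al be P Q ->
  be^2 * (fst Q - fst P)^2 + al^2 * (snd Q - snd P)^2 = (fst P * snd Q - snd P * fst Q)^2.
Proof.
  intros Hbe Hal HPQ Ht.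
  pose proof (tangent_disc0 al be P Q Hbe Hal HPQ Ht) as Hd.
  unfold chord_c2, chord_c1, chord_c0 in Hd.
  destruct P as [px py], Q as [qx qy]; cbn [fst snd] in *.
  apply Rminus_diag_uniq.
  match type of Hd with ?D = 0 =>
    replace (be^2 * (qx - px)^2 + al^2 * (qy - py)^2 - (px * qy - py * qx)^2)
      with (al^2 * be^2 / 4 * D) by (field; lra) end.
  rewrite Hd. ring.
Qed.

(* A caustic touched by a chord of the ellipse [(a, b)] lies strictly inside it:
   otherwise both ends of the chord would be roots of the tangency quadratic. *)
Lemma caustic_inside a b al be P Q : 0 < b -> b < a ->
  0 < be -> be < al -> al^2 - be^2 = a^2 - b^2 ->
  on_ellipse a b P -> on_ellipse a b Q -> P <> Q -> line_tangent al be P Q -> al < a.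
Proof.
  intros Hb Hab Hbe Hal Hc HP HQ HPQ Ht.
  destruct (Rlt_or_le al a) as [H | H]; auto. exfalso.
  assert (Hc2 := chord_c2_pos al be P Q Hbe Hal HPQ).
  pose proof (quad_disc0_nonneg _ _ _ Hc2 (tangent_disc0 al be P Q Hbe Hal HPQ Ht)) as Hq.
  assert (Inside : forall X, on_ellipse a b X -> chord_c0 al be X <= 0).
  { intros X HX. unfold on_ellipse, chord_c0 in *.
    assert (b <= be) by nra.
    enough (fst X ^ 2 / al ^ 2 + snd X ^ 2 / be ^ 2 <= 1) by lra. rewrite <- HX.
    apply Rplus_le_compat; apply Rmult_le_compat_l; try apply pow2_ge_0;
      apply Rinv_le_contravar; try (apply pow_lt; lra); nra. }
  assert (Root : forall t, chord_c2 al be P Q * t^2 + chord_c1 al be P Q * t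
                           + chord_c0 al be P <= 0 -> on_ellipse al be (padd P (pscale t (psub Q P)))).
  { intros t Ht'. apply on_ellipse_line; try lra.
    specialize (Hq t). apply Rle_antisym; [exact Ht'|].
    apply (Rmult_le_reg_l (chord_c2 al be P Q)); lra. }
  destruct Ht as [t0 [_ Hu]].
  assert (E0 : t0 = 0).
  { apply Hu, Root. pose proof (Inside P HP). lra. }
  assert (E1 : t0 = 1).
  { apply Hu, Root. pose proof (Inside Q HQ).
    replace (chord_c2 al be P Q * 1 ^ 2 + chord_c1 al be P Q * 1 + chord_c0 al be P)
      with (chord_c0 al be Q) by (unfold chord_c2, chord_c1, chord_c0; field; lra).
    lra. }
  lra.
Qed.

(** * Eccentric angles

    A point of the ellipse with polar angle [phi] has eccentric angle
    [ecc a b phi], which stays within [PI/2] of [phi]; polar steps in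
    [(0, PI)] become eccentric steps in [(0, PI)]. *)

Definition ecc (a b phi : R) : R :=
  phi + atan ((a - b) * sin phi * cos phi / (b * cos phi ^ 2 + a * sin phi ^ 2)).

(* [ecc_norm2 a b phi] is [(a b / r) ^ 2] for the point of polar angle [phi]
   and modulus [r] on the ellipse. *)
Definition ecc_norm2 (a b phi : R) : R := b^2 * cos phi ^ 2 + a^2 * sin phi ^ 2.

Lemma ecc_norm2_pos a b phi : 0 < b -> b < a -> 0 < ecc_norm2 a b phi.
Proof.
  intros Hb Hab. unfold ecc_norm2.
  pose proof (sin2_cos2 phi) as Hsc. unfold Rsqr in Hsc.
  assert (0 <= sin phi ^ 2) by apply pow2_ge_0.
  assert (b^2 * sin phi ^ 2 <= a^2 * sin phi ^ 2) by (apply Rmult_le_compat_r; nra).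
  nra.
Qed.

Lemma ecc_trig a b phi : 0 < b -> b < a ->
  cos (ecc a b phi) = b * cos phi / sqrt (ecc_norm2 a b phi) /\
  sin (ecc a b phi) = a * sin phi / sqrt (ecc_norm2 a b phi).
Proof.
  intros Hb Hab.
  pose proof (ecc_norm2_pos a b phi Hb Hab) as HE.
  unfold ecc. unfold ecc_norm2 in *.
  set (c := cos phi) in *. set (s := sin phi) in *.
  pose proof (sin2_cos2 phi) as Hsc. unfold Rsqr in Hsc. fold c s in Hsc.
  set (D := b * c^2 + a * s^2).
  assert (HD : 0 < D).
  { unfold D. assert (0 <= s^2) by apply pow2_ge_0.
    assert (b * s^2 <= a * s^2) by (apply Rmult_le_compat_r; lra). nra. }
  set (E := b^2 * c^2 + a^2 * s^2) in *.
  assert (HsE : 0 < sqrt E) by (apply sqrt_lt_R0; auto).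
  set (x := (a - b) * s * c / D).
  assert (Hx : sqrt (1 + x²) = sqrt E / D).
  { rewrite <- (sqrt_pow2 (sqrt E / D)) by (apply Rlt_le, Rdiv_lt_0_compat; auto).
    f_equal. unfold Rdiv. rewrite Rpow_mult_distr, pow2_sqrt by lra.
    unfold Rsqr, x, E. field_simplify; [|lra|lra]. f_equal.
    apply Rminus_diag_uniq.
    match goal with |- ?L - ?R = 0 =>
      replace (L - R) with ((a^2 * s^2 + b^2 * c^2) * (s * s + c * c - 1)) by (unfold D; ring) end.
    rewrite Hsc. ring. }
  rewrite cos_plus, sin_plus, cos_atan, sin_atan. fold c s D x. rewrite Hx.
  split.
  - transitivity ((c * D - s * (a - b) * s * c) / sqrt E); [unfold x; field; split; lra|].
    f_equal. unfold D. transitivity (b * c * (s * s + c * c)); [ring | rewrite Hsc; ring].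
  - transitivity ((s * D + c * (a - b) * s * c) / sqrt E); [unfold x; field; split; lra|].
    f_equal. unfold D. transitivity (a * s * (s * s + c * c)); [ring | rewrite Hsc; ring].
Qed.

Lemma ecc_point a b r phi : 0 < b -> b < a -> 0 <= r ->
  on_ellipse a b (r * cos phi, r * sin phi) ->
  r * cos phi = a * cos (ecc a b phi) /\ r * sin phi = b * sin (ecc a b phi).
Proof.
  intros Hb Hab Hr He. unfold on_ellipse in He. cbn [fst snd] in He.
  destruct (ecc_trig a b phi Hb Hab) as [-> ->].
  pose proof (ecc_norm2_pos a b phi Hb Hab) as HE.
  set (E := ecc_norm2 a b phi) in *.
  assert (HsE : 0 < sqrt E) by (apply sqrt_lt_R0; auto).
  assert (Hr2 : r = a * b / sqrt E).
  { rewrite <- (sqrt_pow2 r) by auto.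
    rewrite <- (sqrt_pow2 (a * b / sqrt E))
      by (apply Rlt_le, Rdiv_lt_0_compat; [apply Rmult_lt_0_compat; lra | exact HsE]).
    f_equal. unfold Rdiv. rewrite Rpow_mult_distr, pow_inv, pow2_sqrt by lra.
    assert (HrE : r^2 * E = a^2 * b^2).
    { assert (Hab2 : 0 < a^2 * b^2) by (apply Rmult_lt_0_compat; apply pow_lt; lra).
      unfold E, ecc_norm2.
      apply (Rmult_eq_reg_r (/ (a^2 * b^2))); [|apply Rgt_not_eq, Rinv_0_lt_compat; lra].
      rewrite Rinv_r by lra. rewrite <- He. field. lra. }
    transitivity (r^2 * E / E); [field; lra|]. rewrite HrE. field. lra. }
  rewrite Hr2. split; field; lra.
Qed.

Lemma ecc_near a b phi : phi - PI / 2 < ecc a b phi < phi + PI / 2.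
Proof.
  unfold ecc.
  pose proof (atan_bound ((a - b) * sin phi * cos phi / (b * cos phi ^ 2 + a * sin phi ^ 2))).
  lra.
Qed.

Lemma ecc_per a b phi : ecc a b (phi + 2 * PI) = ecc a b phi + 2 * PI.
Proof.
  unfold ecc. rewrite sin_plus, cos_plus, sin_2PI, cos_2PI.
  replace (sin phi * 1 + cos phi * 0) with (sin phi) by ring.
  replace (cos phi * 1 - sin phi * 0) with (cos phi) by ring. ring.
Qed.

Lemma sin_pos_range d : 0 < sin d -> - PI < d < 2 * PI -> 0 < d < PI.
Proof.
  intros Hs Hd. split.
  - destruct (Rlt_or_le 0 d) as [H | H]; auto. exfalso.
    assert (0 <= sin (- d)) by (apply sin_ge_0; lra). rewrite sin_neg in H0. lra.
  - destruct (Rlt_or_le d PI) as [H | H]; auto. exfalso.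
    assert (0 <= sin (d - PI)) by (apply sin_ge_0; lra).
    rewrite sin_minus, sin_PI, cos_PI in H0. lra.
Qed.

Lemma nrm_pos_on a b P : on_ellipse a b P -> 0 < nrm P.
Proof.
  intros H. unfold nrm, nrm2. apply sqrt_lt_R0.
  destruct P as [x y]. unfold on_ellipse in H. cbn [fst snd] in *.
  pose proof (pow2_ge_0 x). pose proof (pow2_ge_0 y).
  destruct (Req_dec x 0) as [-> | Hx]; [|pose proof (pow2_gt_0 x Hx); lra].
  destruct (Req_dec y 0) as [-> | Hy]; [|pose proof (pow2_gt_0 y Hy); lra].
  unfold Rdiv in H. simpl in H. lra.
Qed.

(* The eccentric angle advances by less than [PI] when the polar angle does:
   the signed area [a b sin (s' - s)] equals [r r' sin (phi' - phi) > 0]. *)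
Lemma ecc_step a b P P' phi phi' : 0 < b -> b < a ->
  on_ellipse a b P -> on_ellipse a b P' ->
  P = (nrm P * cos phi, nrm P * sin phi) -> P' = (nrm P' * cos phi', nrm P' * sin phi') ->
  phi < phi' < phi + PI ->
  ecc a b phi < ecc a b phi' < ecc a b phi + PI.
Proof.
  intros Hb Hab HP HP' EP EP' Hphi.
  pose proof (nrm_pos_on a b P HP) as Hr. pose proof (nrm_pos_on a b P' HP') as Hr'.
  set (r := nrm P) in *. set (r' := nrm P') in *.
  rewrite EP in HP. rewrite EP' in HP'.
  destruct (ecc_point a b r phi Hb Hab (Rlt_le _ _ Hr) HP) as [C1 S1].
  destruct (ecc_point a b r' phi' Hb Hab (Rlt_le _ _ Hr') HP') as [C2 S2].
  set (s := ecc a b phi) in *. set (s' := ecc a b phi') in *.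
  assert (Hsin : 0 < sin (s' - s)).
  { assert (0 < sin (phi' - phi)) by (apply sin_gt_0; lra).
    assert (E : a * b * sin (s' - s) = r * r' * sin (phi' - phi)).
    { rewrite !sin_minus.
      transitivity ((a * cos s) * (b * sin s') - (b * sin s) * (a * cos s')); [ring|].
      rewrite <- C1, <- S1, <- C2, <- S2. ring. }
    assert (0 < r * r' * sin (phi' - phi)) by (apply Rmult_lt_0_compat; [nra | lra]).
    assert (0 < a * b) by nra. nra. }
  pose proof (ecc_near a b phi) as Ns. pose proof (ecc_near a b phi') as Ns'.
  fold s s' in Ns, Ns'.
  pose proof (sin_pos_range (s' - s) Hsin). lra.
Qed.

(** * Even periodic orbits are centrally symmetric *)

Lemma eccentric_orbit a b N (P : nat -> pt) (phi : nat -> R) :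
  0 < b -> b < a -> (forall i, on_ellipse a b (P i)) ->
  (forall i, (i <= N)%nat -> P i = (nrm (P i) * cos (phi i), nrm (P i) * sin (phi i))) ->
  (forall i, (i < N)%nat -> phi i < phi (S i) < phi i + PI) ->
  phi N = phi O + 2 * PI ->
  exists s : nat -> R,
    (forall i, (i <= N)%nat -> P i = (a * cos (s i), b * sin (s i))) /\
    (forall i, (i < N)%nat -> s i < s (S i) < s i + PI) /\
    s N = s O + 2 * PI.
Proof.
  intros Hb Hab Hell Hpol Hinc Htot.
  exists (fun i => ecc a b (phi i)). split; [|split].
  - intros i Hi. pose proof (Hell i) as He. rewrite (Hpol i Hi) in He.
    destruct (ecc_point a b (nrm (P i)) (phi i) Hb Hab (sqrt_pos _) He) as [C S].
    rewrite (Hpol i Hi) at 1. rewrite C, S. reflexivity.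
  - intros i Hi. apply (ecc_step a b (P i) (P (S i))); auto; apply Hpol || apply Hinc; lia.
  - cbv beta. rewrite Htot. apply ecc_per.
Qed.

(* Poncelet: an orbit of [N = 2 k] tangent chords closing after one turn makes
   exactly half a turn in [k] steps.  Each chord advances [F] by [Gf 0], the
   whole orbit by two half-periods of [F]. *)
Section HalfTurn.
Variables a b lam : R.
Hypothesis Hb : 0 < b.
Hypothesis Hab : b < a.
Hypothesis Hl : 0 < lam.
Hypothesis Hlb : lam < b ^ 2.
Variables (N k : nat) (s : nat -> R).
Hypothesis HNk : N = (2 * k)%nat.
Hypothesis Hstep : forall i, (i < N)%nat -> s i < s (S i) < s i + PI.
Hypothesis Hchord : forall i, (i < N)%nat -> tangent_chord a b lam (s i) (s (S i)).
Hypothesis HsN : s N = s O + 2 * PI.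

Lemma F_steps j i : (i + j <= N)%nat ->
  F a b lam (s (i + j)%nat) - F a b lam (s i) = INR j * Gf a b lam 0.
Proof.
  induction j; intros Hij.
  - rewrite Nat.add_0_r. simpl. ring.
  - rewrite S_INR, Nat.add_succ_r.
    pose proof (chord_step a b lam Hb Hab Hl Hlb _ _ (Hstep (i + j) ltac:(lia))
                  (Hchord (i + j) ltac:(lia))).
    pose proof (IHj ltac:(lia)). lra.
Qed.

Lemma half_turn i : (i <= k)%nat -> s (i + k)%nat = s i + PI.
Proof.
  intros Hi.
  set (half := F a b lam (0 + PI) - F a b lam 0).
  assert (Hhalf : forall x, F a b lam (x + PI) - F a b lam x = half)
    by (intros x; apply F_halfper; auto).
  assert (Hturn : INR N * Gf a b lam 0 = 2 * half).
  { pose proof (F_steps N O ltac:(lia)) as E. simpl in E. rewrite HsN in E.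
    pose proof (Hhalf (s O)). pose proof (Hhalf (s O + PI)).
    replace (s O + PI + PI) with (s O + 2 * PI) in * by ring. lra. }
  rewrite HNk, mult_INR in Hturn. simpl in Hturn.
  pose proof (F_steps k i ltac:(lia)). pose proof (Hhalf (s i)).
  apply (F_inj a b lam Hb Hab Hlb). lra.
Qed.
End HalfTurn.

Definition antipode (p : pt) : pt := (- fst p, - snd p).

Lemma antipodal_polygon N k (P : nat -> pt) :
  (N = 2 * k)%nat -> (0 < k)%nat -> (forall i, P (i + N)%nat = P i) ->
  (forall i, (i <= k)%nat -> P (i + k)%nat = antipode (P i)) ->
  forall i, P i = antipode (P (i + k)%nat).
Proof.
  intros HNk Hk Hper Hhalf.
  assert (Hmod : forall i, P i = P (i mod N)).
  { intros i. rewrite (Nat.div_mod i N) at 1 by lia.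
    induction (i / N)%nat as [|q IH].
    - f_equal. lia.
    - replace (N * S q + i mod N)%nat with ((N * q + i mod N) + N)%nat by lia.
      rewrite Hper. exact IH. }
  intros i. rewrite (Hmod i), (Hmod (i + k)%nat), <- Nat.Div0.add_mod_idemp_l.
  assert (Hi : (i mod N < N)%nat) by (apply Nat.mod_upper_bound; lia).
  set (j := (i mod N)%nat) in *.
  destruct (Nat.le_gt_cases k j) as [Hj | Hj].
  - replace (j + k)%nat with ((j - k) + 1 * N)%nat by lia.
    rewrite Nat.Div0.mod_add, Nat.mod_small by lia.
    replace j with ((j - k) + k)%nat at 1 by lia. apply Hhalf. lia.
  - rewrite Nat.mod_small by lia. rewrite (Hhalf j) by lia.
    unfold antipode. destruct (P j). cbn [fst snd]. f_equal; ring.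
Qed.

Fixpoint sumR (g : nat -> R) (n : nat) : R :=
  match n with O => 0 | S n => sumR g n + g n end.

Lemma sumR_ext g h n : (forall i, (i < n)%nat -> g i = h i) -> sumR g n = sumR h n.
Proof.
  induction n; intros H; simpl; auto.
  rewrite IHn by (intros; apply H; lia). rewrite H by lia. reflexivity.
Qed.

Lemma sumR_first g n : sumR g (S n) = g O + sumR (fun i => g (S i)) n.
Proof. induction n; simpl in *; [ring|]. rewrite IHn. ring. Qed.

Lemma fold_sumR g m n :
  fold_right Rplus 0 (map g (seq m n)) = sumR (fun i => g (m + i)%nat) n.
Proof.
  revert m. induction n; intros m; [reflexivity|].
  cbn [seq map fold_right]. rewrite IHn, sumR_first, Nat.add_0_r. f_equal.
  apply sumR_ext. intros. f_equal. lia.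
Qed.

Lemma sumR_shift g N k : (forall i, g (i + N)%nat = g i) ->
  sumR (fun i => g (i + k)%nat) N = sumR g N.
Proof.
  intros Hp. induction k.
  - apply sumR_ext. intros. f_equal. lia.
  - rewrite <- IHk.
    assert (E := sumR_first (fun i => g (i + k)%nat) N). simpl in E.
    rewrite Nat.add_comm, Hp in E.
    transitivity (sumR (fun i => g (S (i + k))) N).
    + apply sumR_ext. intros. f_equal. lia.
    + lra.
Qed.

Lemma inv_focus_antipode a b X :
  inv_circle (focus2 a b) (antipode X) = antipode (inv_circle (focus1 a b) X).
Proof.
  unfold inv_circle, antipode, focus1, focus2, padd, pscale, psub, nrm2; cbn [fst snd].
  set (c := sqrt (a^2 - b^2)).
  replace ((- fst X - c) ^ 2 + (- snd X - 0) ^ 2)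
    with ((fst X - - c) ^ 2 + (snd X - 0) ^ 2) by ring.
  f_equal; ring.
Qed.

(* For a polygon with [P i = - P (i + k)], the polygons inverted in the two
   foci are images of each other under the half turn, up to a shift of [k]
   indices; both operations preserve signed area. *)
Lemma area_antipodal a b N k (P : nat -> pt) :
  (forall i, P (i + N)%nat = P i) ->
  (forall i, P i = antipode (P (i + k)%nat)) ->
  signed_area (fun i => inv_circle (focus1 a b) (P i)) N =
  signed_area (fun i => inv_circle (focus2 a b) (P i)) N.
Proof.
  intros Hper Hsym. unfold signed_area. f_equal. rewrite !fold_sumR.
  set (W := fun i => inv_circle (focus1 a b) (P i)).
  set (g := fun i => fst (W i) * snd (W (S i)) - fst (W (S i)) * snd (W i)).
  rewrite (sumR_ext _ g) by reflexivity.
  rewrite <- (sumR_shift g N k).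
  - apply sumR_ext. intros i _. unfold g, W. cbv beta. rewrite !Nat.add_0_l.
    rewrite (Hsym i), (Hsym (S i)), !inv_focus_antipode.
    replace (S i + k)%nat with (S (i + k)) by lia. unfold antipode. cbn [fst snd]. ring.
  - intros i. unfold g, W. replace (S (i + N)) with (S i + N)%nat by lia.
    rewrite !Hper. reflexivity.
Qed.

Theorem mainTheorem4 (a b : R) (N : nat) (P : nat -> pt) :
  0 < b -> b < a -> (4 <= N)%nat -> Nat.Even N ->
  billiard_traj a b N P ->
  signed_area (fun i => inv_circle (focus1 a b) (P i)) N =
  signed_area (fun i => inv_circle (focus2 a b) (P i)) N.
Proof.
  intros Hb Hab HN4 [k HNk]
    (Hper & Hell & Hdist & _ & (phi & Hpol & Hinc & Htot) & _ & (al & be & Hconf & Htan)).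
  destruct Hconf as (Hbe & Hal & Hconf).
  destruct (eccentric_orbit a b N P phi Hb Hab Hell Hpol Hinc Htot) as (s & Hpt & Hstep & HsN).
  assert (Hala : al < a) by (apply (caustic_inside a b al be (P O) (P 1%nat)); auto).
  set (lam := a^2 - al^2).
  assert (Hchord : forall i, (i < N)%nat -> tangent_chord a b lam (s i) (s (S i))).
  { intros i Hi. pose proof (tangent_poly al be _ _ Hbe Hal (Hdist i) (Htan i)) as T.
    rewrite (Hpt i), (Hpt (S i)) in T by lia. cbn [fst snd] in T.
    unfold tangent_chord. replace (b^2 - lam) with (be^2) by (unfold lam; lra).
    replace (a^2 - lam) with (al^2) by (unfold lam; ring). exact T. }
  apply (area_antipodal a b N k P Hper).
  apply (antipodal_polygon N k P HNk ltac:(lia) Hper). intros i Hi.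
  rewrite (Hpt (i + k)%nat), (Hpt i) by lia.
  rewrite (half_turn a b lam Hb Hab ltac:(unfold lam; nra) ltac:(unfold lam; nra)
             N k s HNk Hstep Hchord HsN i Hi).
  unfold antipode. rewrite neg_cos, neg_sin. cbn [fst snd]. f_equal; ring.
Qed.
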